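(* Let $\mathcal{C}\subseteq\mathbb{R}[x_1,\dots,x_n]$ be a convex cone with apex $0$ which is closed in the LF-topology of $\mathbb{R}[x_1,\dots,x_n]$. Then $\mathfrak{D}_\mathcal{C}\subseteq\mathfrak{d}_\mathcal{C}$.
   Context: $\mathfrak{d}$ is the set of linear maps $\sum_\alpha q_\alpha\partial^\alpha$ on $\mathbb{R}[x_1,\dots,x_n]$ with $q_\alpha$ a polynomial of degree $\le|\alpha|$ for all $\alpha$; $\mathfrak{D}$ is the set of those elements of $\mathfrak{d}$ with trivial kernel. For $A\in\mathfrak{d}$, $e^{tA}=\sum_kt^kA^k/k!$ is well defined since $A$ preserves each space of polynomials of degree $\le d$. $\mathfrak{D}_\mathcal{C}=\{T\in\mathfrak{D}: T\mathcal{C}\subseteq\mathcal{C}\}$ and $\mathfrak{d}_\mathcal{C}=\{A\in\mathfrak{d}: e^{tA}\in\mathfrak{D}_\mathcal{C}\ \forall t\ge0\}$. The LF-topology is the inductive limit topology of the finite-dimensional subspaces of polynomials of degree $\le d$. *)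

From HB Require Import structures.
From mathcomp Require Import all_boot all_algebra.
From Stdlib Require Import Reals.
From mathcomp Require Import Rstruct.
From mathcomp.multinomials Require Import mpoly.
From Coquelicot Require Hierarchy Series.

Set Implicit Arguments.
Unset Strict Implicit.
Unset Printing Implicit Defensive.

Import GRing.Theory.
Local Open Scope ring_scope.

(* Since d^alpha p = 0 when |alpha| > deg p, the (possibly infinite) formal
   sum reduces to the finite sum over monomials alpha with |alpha| < msize p
   = 1 + deg p.  p^`M[m] is the mixed partial derivative d^m. *)
Definition diffop (n : nat) (q : 'X_{1..n} -> {mpoly R[n]})
  (p : {mpoly R[n]}) : {mpoly R[n]} :=
  \sum_(m : 'X_{1..n < msize p}) q m * p^`M[m].

(* A \in d : A = sum_alpha q_alpha d^alpha with deg q_alpha <= |alpha|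
   (msize q = 1 + deg q, msize 0 = 0). *)
Definition in_d (n : nat) (A : {mpoly R[n]} -> {mpoly R[n]}) : Prop :=
  exists q : 'X_{1..n} -> {mpoly R[n]},
    (forall m, leq (msize (q m)) (mdeg m).+1) /\ (forall p, A p = diffop q p).

Definition in_D (n : nat) (A : {mpoly R[n]} -> {mpoly R[n]}) : Prop :=
  in_d A /\ (forall p, A p = 0 -> p = 0).

(* e^{tA} p = sum_k t^k A^k p / k!, computed coefficientwise in the
   finite-dimensional space of polynomials of degree <= deg p (which A \in d
   preserves): the coefficient of x^m is the sum of the real series
   sum_k t^k/k! * (A^k p)_m. *)
Definition expop (n : nat) (t : R) (A : {mpoly R[n]} -> {mpoly R[n]})
  (p : {mpoly R[n]}) : {mpoly R[n]} :=
  \sum_(m : 'X_{1..n < msize p})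
     (Series.Series (fun k : nat => t ^+ k / (k`!)%:R * (iter k A p)@_m))
       *: 'X_[(m : 'X_{1..n})].

Definition convex_cone (n : nat) (C : {mpoly R[n]} -> Prop) : Prop :=
  C 0 /\
  forall (a b : R) (p q : {mpoly R[n]}), 0 <= a -> 0 <= b -> C p -> C q ->
    C (a *: p + b *: q).

(* C is closed in the LF-topology (inductive limit of the finite-dimensional
   spaces P_d of polynomials of degree < d with their Euclidean topology):
   for every d, C \cap P_d is closed in P_d, where P_d is identified with
   R^{monomials of degree < d} through coordinates. The uniform space of
   functions from a finite type to R carries the product (Euclidean)
   topology. *)
Definition LF_closed (n : nat) (C : {mpoly R[n]} -> Prop) : Prop :=
  forall d : nat,
    @Hierarchy.closed
      (Hierarchy.fct_UniformSpace 'X_{1..n < d} Hierarchy.R_UniformSpace)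
      (fun f : 'X_{1..n < d} -> R =>
         C (\sum_(m : 'X_{1..n < d}) f m *: 'X_[(m : 'X_{1..n})])).

Definition in_DC (n : nat) (C : {mpoly R[n]} -> Prop)
  (T : {mpoly R[n]} -> {mpoly R[n]}) : Prop :=
  in_D T /\ (forall p, C p -> C (T p)).

Definition in_dC (n : nat) (C : {mpoly R[n]} -> Prop)
  (A : {mpoly R[n]} -> {mpoly R[n]}) : Prop :=
  in_d A /\ (forall t : R, 0 <= t -> in_DC C (expop t A)).

(* An operator lies in d exactly when it is linear and does not raise the
   degree: given such an L, the coefficients q_b of L = sum_a q_a d^a are found
   by induction on |b|, because applied to x^b only the terms with |a| < |b|
   and the term a = b survive.  Such an operator T acts on each finite
   dimensional space of polynomials of degree < d as a bounded map, so the
   coefficients of e^{tT} p are absolutely convergent series; e^{tT} is again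
   linear and degree non-increasing, hence in d, and it is injective since
   e^{-tT} e^{tT} = 1 by the Cauchy product.  Finally, if T maps the convex
   cone C into itself and t >= 0, all partial sums sum_(k < N) t^k/k! T^k p
   lie in C and in a fixed finite dimensional space, so their limit e^{tT} p
   lies in C by LF-closedness. *)

From HB Require Import structures.
From mathcomp Require Import all_boot all_order all_algebra.
From Stdlib Require Import Reals.
From mathcomp Require Import Rstruct.
From mathcomp.multinomials Require Import ssrcomplements mpoly.
From mathcomp Require Import zify ring.
From Coquelicot Require Hierarchy Series.

Set Implicit Arguments.
Unset Strict Implicit.
Unset Printing Implicit Defensive.

Import Order.TTheory GRing.Theory Num.Theory.
Local Open Scope ring_scope.

Section Degree.
Variable n : nat.
Implicit Types (p r : {mpoly R[n]}) (m a b g : 'X_{1..n}).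

Lemma mcoeff_eq0_msize p m : (msize p <= mdeg m)%nat -> p@_m = 0.
Proof. by move/msize_mdeg_ge/memN_msupp_eq0. Qed.

Lemma msize_leq_mcoeff0 p k :
  (forall m, (k <= mdeg m)%nat -> p@_m = 0) -> (msize p <= k)%nat.
Proof.
move=> p0; rewrite msizeE; apply/bigmax_leqP_seq => m + _.
by rewrite mcoeff_msupp ltnNge; apply: contra => /p0 ->.
Qed.

Lemma msize_mpolyw k (f : 'X_{1..n} -> R) :
  (msize (\sum_(m : 'X_{1..n < k}) f m *: 'X_[m]) <= k)%nat.
Proof.
apply: msize_leq_mcoeff0 => m km; rewrite raddf_sum big1 // => a _ /=.
rewrite mcoeffZ mcoeffX; case: eqP => [am|]; last by rewrite mulr0.
by have := bmdeg a; rewrite am ltnNge km.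
Qed.

Lemma mderivm_eq0 p m : (msize p <= mdeg m)%nat -> p^`M[m] = 0.
Proof.
move=> pm; apply/mpolyP => m'; rewrite mcoeff_mderivm mcoeff0.
by rewrite mcoeff_eq0_msize ?mul0rn // mdegD (leq_trans pm) ?leq_addr.
Qed.

Lemma msize_mderivm p a : (msize p^`M[a] <= msize p - mdeg a)%nat.
Proof.
apply: msize_leq_mcoeff0 => m pam; rewrite mcoeff_mderivm.
by rewrite mcoeff_eq0_msize ?mul0rn // mdegD; lia.
Qed.

Lemma msize_mul_mderivm r p a :
  (msize r <= (mdeg a).+1)%nat -> (msize (r * p^`M[a]) <= msize p)%nat.
Proof.
have [->|r0] := eqVneq r 0; first by rewrite mul0r msize0.
have [->|pa0] := eqVneq p^`M[a] 0; first by rewrite mulr0 msize0.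
rewrite msizeM // -[(_ + _)%nat]/(msize r + msize p^`M[a])%nat.
have := msize_mderivm p a; rewrite -msize_poly_eq0 -lt0n in pa0; lia.
Qed.

Definition mfact b : R := (\prod_(i < n) (b i)`!)%:R.

Lemma mfact_neq0 b : mfact b != 0.
Proof. by rewrite pnatr_eq0 -lt0n prodn_gt0 // => i; rewrite fact_gt0. Qed.

Lemma mderivmXX b : ('X_[b] : {mpoly R[n]})^`M[b] = mfact b *: 1.
Proof.
rewrite mderivmX -mpolyX0; congr (_ *: 'X_[_]).
  by congr (_%:R); apply: eq_bigr => i _; rewrite ffactnn.
by apply/mnmP => i; rewrite mnmBE subnn mnm0E.
Qed.

Lemma mderivmX_eq0 b g :
  mdeg b = mdeg g -> b != g -> ('X_[g] : {mpoly R[n]})^`M[b] = 0.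
Proof.
move=> bg /negPf nbg; apply/mpolyP => m; rewrite mcoeff_mderivm mcoeffX mcoeff0.
case: eqP => [gbm|]; last by rewrite mul0rn.
have /eqP := congr1 mdeg gbm; rewrite mdegD bg -{1}[mdeg g]addn0 eqn_add2l.
by rewrite eq_sym mdeg_eq0 => /eqP m0; rewrite gbm m0 addm0 eqxx in nbg.
Qed.

Lemma big_bmnm_widen (V : nmodType) k1 k2 (F : 'X_{1..n} -> V) :
  (k1 <= k2)%nat -> (forall m, (k1 <= mdeg m)%nat -> F m = 0) ->
  \sum_(m : 'X_{1..n < k1}) F m = \sum_(m : 'X_{1..n < k2}) F m.
Proof.
move=> k12 F0; rewrite (big_sub_widen _ 'X_{1..n < k2} xpredT F) /=.
  by rewrite big_rmcond //= => m; rewrite -leqNgt => /F0.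
by move=> m /leq_trans; apply.
Qed.

Lemma big_bmnm_recr (V : nmodType) k (F : 'X_{1..n} -> V) :
  \sum_(m : 'X_{1..n < k.+1}) F m =
  \sum_(m : 'X_{1..n < k}) F m + \sum_(m : 'X_{1..n < k.+1} | mdeg m == k) F m.
Proof.
rewrite (bigID (fun m : 'X_{1..n < k.+1} => mdeg m == k)) /= addrC.
congr (_ + _); rewrite (big_sub_widen _ 'X_{1..n < k.+1} xpredT F) /=.
  apply: eq_bigl => m /=; have := bmdeg m; rewrite ltnS leq_eqVlt.
  by case: eqP => [->|]; rewrite ?ltnn.
by move=> m /ltnW.
Qed.

End Degree.

Section Filtered.
Variable n : nat.
Implicit Types (p q : {mpoly R[n]}) (m a b g : 'X_{1..n}).

Definition filtered_linear (L : {mpoly R[n]} -> {mpoly R[n]}) :=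
  (forall (c : R) p q, L (c *: p + q) = c *: L p + L q) /\
  (forall p, (msize (L p) <= msize p)%nat).

Section FilteredLinear.
Variable L : {mpoly R[n]} -> {mpoly R[n]}.
Hypothesis fL : filtered_linear L.

Lemma filtered_linear0 : L 0 = 0.
Proof. by have := fL.1 (-1) 0 0; rewrite scaler0 add0r scaleN1r addNr. Qed.

Lemma filtered_linearD p q : L (p + q) = L p + L q.
Proof. by rewrite -[p]scale1r fL.1 !scale1r. Qed.

Lemma filtered_linearZ c p : L (c *: p) = c *: L p.
Proof. by rewrite -[c *: p]addr0 fL.1 filtered_linear0 !addr0. Qed.

Lemma filtered_linear_sum (I : Type) (s : seq I) (P : pred I)
    (F : I -> {mpoly R[n]}) :
  L (\sum_(i <- s | P i) F i) = \sum_(i <- s | P i) L (F i).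
Proof. exact: (big_morph L filtered_linearD filtered_linear0). Qed.

Lemma msize_filtered_linear p : (msize (L p) <= msize p)%nat.
Proof. exact: fL.2. Qed.

Lemma mcoeff_filtered_linear k p m : (msize p <= k)%nat ->
  (L p)@_m = \sum_(g : 'X_{1..n < k}) p@_g * (L 'X_[g])@_m.
Proof.
move=> pk; rewrite {1}(mpolywE pk) filtered_linear_sum raddf_sum.
by apply: eq_bigr => g _; rewrite filtered_linearZ /= mcoeffZ.
Qed.

End FilteredLinear.

Lemma filtered_linear_comp L1 L2 :
  filtered_linear L1 -> filtered_linear L2 -> filtered_linear (L1 \o L2).
Proof.
move=> f1 f2; split=> [c p q|p] /=; first by rewrite f2.1 f1.1.
exact: leq_trans (msize_filtered_linear f1 _) (msize_filtered_linear f2 _).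
Qed.

Lemma filtered_linear_iter L k : filtered_linear L -> filtered_linear (iter k L).
Proof.
by move=> fL; elim: k => [|k IH] //=; apply: (filtered_linear_comp fL IH).
Qed.

Lemma diffop_widen (q : 'X_{1..n} -> {mpoly R[n]}) p k : (msize p <= k)%nat ->
  diffop q p = \sum_(m : 'X_{1..n < k}) q m * p^`M[m].
Proof.
move=> pk; apply: (big_bmnm_widen (F := fun m => q m * p^`M[m])) => // m pm.
by rewrite mderivm_eq0 ?mulr0.
Qed.

Lemma in_d_filtered_linear A : in_d A -> filtered_linear A.
Proof.
case=> q [qdeg Aq]; split=> [c p1 p2|p]; rewrite !Aq.
  pose k := (msize p1 + msize p2)%nat.
  have k1 : (msize p1 <= k)%nat by rewrite leq_addr.
  have k2 : (msize p2 <= k)%nat by rewrite leq_addl.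
  have k12 : (msize (c *: p1 + p2) <= k)%nat.
    rewrite (leq_trans (msizeD_le _ _)) // geq_max k2 andbT.
    exact: leq_trans (msizeZ_le _ _) k1.
  rewrite !(diffop_widen q k1) !(diffop_widen q k2) (diffop_widen q k12).
  rewrite scaler_sumr -big_split /=; apply: eq_bigr => m _.
  by rewrite mderivmD mderivmZ mulrDr scalerAr.
rewrite (leq_trans (msize_sum _ _ _)) //; apply/bigmax_leqP => m _.
exact: msize_mul_mderivm.
Qed.

Section DiffopCoefficients.
Variable L : {mpoly R[n]} -> {mpoly R[n]}.
Hypothesis fL : filtered_linear L.

Fixpoint dcoef_rec (d : nat) b : {mpoly R[n]} :=
  if d is d'.+1 then
    if mdeg b == d' then
      (mfact b)^-1 *:
        (L 'X_[b] - \sum_(a : 'X_{1..n < d'}) dcoef_rec d' a * 'X_[b]^`M[a])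
    else dcoef_rec d' b
  else 0.

Definition dcoef b := dcoef_rec (mdeg b).+1 b.

Lemma dcoef_recE d b : (mdeg b < d)%nat -> dcoef_rec d b = dcoef b.
Proof.
elim: d => [//|d IH] bd; have [bdE|bdN] := eqVneq (mdeg b) d.
  by rewrite /dcoef bdE.
by rewrite /= (negPf bdN) IH // ltn_neqAle bdN -ltnS.
Qed.

Lemma dcoefE b : dcoef b =
  (mfact b)^-1 *:
    (L 'X_[b] - \sum_(a : 'X_{1..n < mdeg b}) dcoef a * 'X_[b]^`M[a]).
Proof.
rewrite /dcoef /= eqxx; congr (_ *: (_ - _)); apply: eq_bigr => a _.
by rewrite dcoef_recE ?bmdeg.
Qed.

Lemma diffop_dcoefX d g : (mdeg g < d)%nat ->
  \sum_(a : 'X_{1..n < d}) dcoef a * 'X_[g]^`M[a] = L 'X_[g].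
Proof.
elim: d g => [//|d IH] g gd.
rewrite (big_bmnm_recr _ (fun a => dcoef a * 'X_[g]^`M[a])).
have [gdE|gdN] := eqVneq (mdeg g) d; last first.
  have gd' : (mdeg g < d)%nat by rewrite ltn_neqAle gdN -ltnS.
  rewrite IH // big1 ?addr0 // => a /eqP ad.
  by rewrite mderivm_eq0 ?mulr0 // msizeX ad.
rewrite (bigD1 (Sub g gd : 'X_{1..n < d.+1})) /=; last by rewrite gdE.
rewrite [X in _ + (_ + X)]big1 => [|a /andP[/eqP ad ag]]; last first.
  by rewrite mderivmX_eq0 ?mulr0 // ad gdE.
rewrite addr0 mderivmXX -scalerAr mulr1 (dcoefE g) gdE scalerA.
by rewrite mulfV ?mfact_neq0 // scale1r addrC subrK.
Qed.

Lemma msize_dcoef b : (msize (dcoef b) <= (mdeg b).+1)%nat.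
Proof.
elim: (mdeg b).+1 {-2}b (ltnSn (mdeg b)) => [//|k IH] {}b bk.
rewrite dcoefE (leq_trans (msizeZ_le _ _)) // (leq_trans (msizeD_le _ _)) //.
rewrite geq_max msizeN -(msizeX R b) msize_filtered_linear //=.
rewrite (leq_trans (msize_sum _ _ _)) //; apply/bigmax_leqP => a _.
by apply: msize_mul_mderivm; apply: IH; have := bmdeg a; lia.
Qed.

Lemma filtered_linear_in_d : in_d L.
Proof.
exists dcoef; split=> [|p]; first exact: msize_dcoef.
rewrite /diffop; set d := msize p; have pE := mpolywE (leqnn d).
rewrite [in LHS]pE filtered_linear_sum //.
under [RHS]eq_bigr => a _ do rewrite [in p^`M[a]]pE raddf_sum mulr_sumr.
rewrite [RHS]exchange_big; apply: eq_bigr => g _ /=.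
rewrite filtered_linearZ // -(diffop_dcoefX (bmdeg g)) scaler_sumr.
by apply: eq_bigr => a _; rewrite mderivmZ scalerAr.
Qed.

End DiffopCoefficients.

Definition l1norm d p := \sum_(m : 'X_{1..n < d}) `|p@_m|.

Lemma l1norm_ge0 d p : 0 <= l1norm d p.
Proof. exact: sumr_ge0. Qed.

Lemma mcoeff_le_l1norm d p m : (mdeg m < d)%nat -> `|p@_m| <= l1norm d p.
Proof.
move=> md; rewrite /l1norm (bigD1 (Sub m md : 'X_{1..n < d})) //= lerDl.
exact: sumr_ge0.
Qed.

Lemma l1normZ d c p : l1norm d (c *: p) = `|c| * l1norm d p.
Proof. by rewrite mulr_sumr; apply: eq_bigr => m _; rewrite mcoeffZ normrM. Qed.

Lemma l1norm_sum d (I : Type) (r : seq I) (F : I -> {mpoly R[n]}) :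
  l1norm d (\sum_(i <- r) F i) <= \sum_(i <- r) l1norm d (F i).
Proof.
elim: r => [|i r IH].
  by rewrite !big_nil /l1norm big1 // => m _; rewrite mcoeff0 normr0.
rewrite !big_cons (le_trans _ (lerD (lexx _) IH)) // -big_split /=.
by apply: ler_sum => m _; rewrite mcoeffD ler_normD.
Qed.

Section Bounded.
Variable T : {mpoly R[n]} -> {mpoly R[n]}.
Hypothesis fT : filtered_linear T.

Lemma filtered_linear_bounded d : exists2 K, 0 <= K &
  forall p, (msize p <= d)%nat -> l1norm d (T p) <= K * l1norm d p.
Proof.
exists (\sum_(g : 'X_{1..n < d}) l1norm d (T 'X_[g])) => [|p pd].
  by apply: sumr_ge0 => g _; apply: l1norm_ge0.
rewrite {1}(mpolywE pd) filtered_linear_sum // (le_trans (l1norm_sum _ _ _)) //.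
rewrite [l1norm d p]/l1norm mulr_sumr; apply: ler_sum => g _.
rewrite filtered_linearZ // l1normZ mulrC ler_wpM2r //.
by rewrite (bigD1 g) //= lerDl; apply: sumr_ge0 => h _; apply: l1norm_ge0.
Qed.

Lemma mcoeff_iter_bound p : exists2 K, 0 <= K &
  forall k m, `|(iter k T p)@_m| <= K ^+ k * l1norm (msize p) p.
Proof.
have [K K0 TK] := filtered_linear_bounded (msize p).
have Tkp k : (msize (iter k T p) <= msize p)%nat.
  exact: msize_filtered_linear (filtered_linear_iter k fT) p.
have normTk k : l1norm (msize p) (iter k T p) <= K ^+ k * l1norm (msize p) p.
  elim: k => [|k IH]; first by rewrite mul1r.
  rewrite exprS -mulrA (le_trans (TK _ (Tkp k))) // ler_wpM2l //.
exists K => // k m; have [mp|pm] := ltnP (mdeg m) (msize p).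
  exact: le_trans (mcoeff_le_l1norm _ mp) (normTk k).
rewrite mcoeff_eq0_msize ?normr0 ?mulr_ge0 ?exprn_ge0 ?l1norm_ge0 //.
exact: leq_trans (Tkp k) pm.
Qed.

End Bounded.

End Filtered.

Local Notation ex_seriesR :=
  (@Series.ex_series Hierarchy.R_AbsRing Hierarchy.R_NormedModule).
Local Notation is_seriesR :=
  (@Series.is_series Hierarchy.R_AbsRing Hierarchy.R_NormedModule).
Local Notation sum_nR := (@Hierarchy.sum_n Hierarchy.R_AbelianMonoid).

Lemma factE k : Factorial.fact k = k`!.
Proof. by elim: k => // k IH; rewrite factS -IH. Qed.

Lemma sum_nE (a : nat -> R) N : sum_nR a N = \sum_(k < N.+1) a k.
Proof.
elim: N => [|N IH]; first by rewrite Hierarchy.sum_O big_ord1.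
by rewrite Hierarchy.sum_Sn IH [RHS]big_ord_recr.
Qed.

Lemma sum_f_R0E (a : nat -> R) N : sum_f_R0 a N = \sum_(k < N.+1) a k.
Proof.
elim: N => [|N IH] /=; first by rewrite big_ord1.
by rewrite IH [RHS]big_ord_recr.
Qed.

Lemma is_series_sum_n_const (a : nat -> R) l :
  (forall N, sum_nR a N = l) -> is_seriesR a l.
Proof.
move=> al.
have evF := @Hierarchy.filter_filter _ _ Hierarchy.eventually_filter.
apply: (Hierarchy.filterlim_ext (fun _ => l)) => [N|]; first by rewrite al.
exact: (@Hierarchy.filterlim_const _ Hierarchy.R_UniformSpace _ evF l).
Qed.

Lemma Series_eq0 (a : nat -> R) : (forall k, a k = 0) -> Series.Series a = 0.
Proof.
move=> a0; apply: Series.is_series_unique; apply: is_series_sum_n_const => N.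
by rewrite sum_nE big1.
Qed.

Lemma ex_series_exp (x : R) : ex_seriesR (fun k => x ^+ k / (k`!)%:R).
Proof.
have [l xl] := exist_exp x; exists l.
apply: (@Series.is_series_ext Hierarchy.R_AbsRing Hierarchy.R_NormedModule
  (fun k => / INR (Factorial.fact k) * x ^ k)%R).
  by move=> k; rewrite RinvE INRE RpowE RmultE factE mulrC.
exact/Series.is_series_Reals.
Qed.

Lemma RabsE (x : R) : Rabs x = `|x|. Proof. by []. Qed.

Lemma ex_series_abs_exp_dominated (c : nat -> R) (A B t : R) : 0 <= A ->
  (forall k, `|c k| <= A ^+ k * B) ->
  ex_seriesR (fun k => Rabs (t ^+ k / (k`!)%:R * c k)).
Proof.
move=> A0 cAB; apply: (@Series.ex_series_le Hierarchy.R_AbsRing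
  Hierarchy.R_CompleteNormedModule _
  (fun k => B * ((`|t| * A) ^+ k / (k`!)%:R))); last first.
  exact: (@Series.ex_series_scal_l Hierarchy.R_AbsRing
    Hierarchy.R_NormedModule _ _ (ex_series_exp _)).
move=> k; change (Rabs (Rabs (t ^+ k / (k`!)%:R * c k)) <=
  B * ((`|t| * A) ^+ k / (k`!)%:R))%R.
rewrite Rabs_Rabsolu; apply/RleP.
rewrite RabsE normrM normf_div normrX normr_nat ?RmultE ?RdivE.
have -> : B * ((`|t| * A) ^+ k / k`!%:R) = `|t| ^+ k / k`!%:R * (A ^+ k * B).
  by rewrite exprMn; ring.
by rewrite ler_wpM2l ?divr_ge0 ?exprn_ge0.
Qed.

Lemma filterlim_fct_fin (I : finType) (f : nat -> I -> R) (g : I -> R) :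
  (forall i, Hierarchy.filterlim (f^~ i) Hierarchy.eventually
     (@Hierarchy.locally Hierarchy.R_UniformSpace (g i))) ->
  Hierarchy.filterlim f Hierarchy.eventually
    (@Hierarchy.locally
       (Hierarchy.fct_UniformSpace I Hierarchy.R_UniformSpace) g).
Proof.
move=> fg P [eps gP].
have evF := @Hierarchy.filter_filter _ _ Hierarchy.eventually_filter.
suff near_s (s : seq I) : Hierarchy.eventually (fun N => forall i, i \in s ->
    @Hierarchy.ball Hierarchy.R_UniformSpace (g i) eps (f N i)).
  refine (Hierarchy.filter_imp _ _ (fun N fN => _) (near_s (enum I))).
  by apply: gP => i; apply: fN; rewrite mem_enum.
elim: s => [|i s IH]; first exact: (@Hierarchy.filter_forall nat _ evF).
have fi : Hierarchy.eventually (fun N =>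
    @Hierarchy.ball Hierarchy.R_UniformSpace (g i) eps (f N i)).
  exact: fg i _ (@Hierarchy.locally_ball Hierarchy.R_UniformSpace (g i) eps).
refine (Hierarchy.filter_imp _ _ (fun N fN j => _)
  (Hierarchy.filter_and _ _ fi IH)).
by case: fN => fiN fsN; rewrite inE => /predU1P [->|/fsN].
Qed.

Lemma ex_series_big (I : Type) (r : seq I) (F : I -> nat -> R) :
  (forall i, ex_seriesR (F i)) -> ex_seriesR (fun k => \sum_(i <- r) F i k).
Proof.
move=> exF; elim: r => [|i r IH].
  exists 0; apply: is_series_sum_n_const => N.
  by rewrite sum_nE big1 // => k _; rewrite big_nil.
apply: (@Series.ex_series_ext Hierarchy.R_AbsRing Hierarchy.R_NormedModule
  (fun k => F i k + \sum_(j <- r) F j k)) => [k|]; first by rewrite big_cons.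
exact: Series.ex_series_plus (exF i) IH.
Qed.

Lemma Series_big (I : Type) (r : seq I) (F : I -> nat -> R) :
  (forall i, ex_seriesR (F i)) ->
  Series.Series (fun k => \sum_(i <- r) F i k) =
  \sum_(i <- r) Series.Series (F i).
Proof.
move=> exF; elim: r => [|i r IH].
  by rewrite big_nil Series_eq0 // => k; rewrite big_nil.
rewrite big_cons -IH -[RHS]/(Rplus _ _) -Series.Series_plus ?exF //.
  by apply: Series.Series_ext => k; rewrite big_cons.
exact: ex_series_big.
Qed.

(* The N-th coefficient of the Cauchy product e^{-t} e^t = 1. *)
Lemma exp_neg_convolution (t : R) N :
  \sum_(k < N.+1) (-t) ^+ k / (k`!)%:R * (t ^+ (N - k) / ((N - k)`!)%:R) =
  (N == 0)%:R.
Proof.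
transitivity ((t - t) ^+ N / (N`!)%:R); last first.
  by rewrite subrr expr0n; case: N => [|N] /=; rewrite ?divr1 ?mul0r.
rewrite exprDn mulr_suml; apply: eq_bigr => k _.
have kN : (k <= N)%nat by rewrite -ltnS.
rewrite -(bin_fact kN) !natrM -mulr_natr.
have nz m : (m`!)%:R != 0 :> R by rewrite pnatr_eq0 -lt0n fact_gt0.
have nzC : ('C(N, k))%:R != 0 :> R by rewrite pnatr_eq0 -lt0n bin_gt0.
by field; rewrite ?nz ?nzC ?mulf_neq0.
Qed.

Lemma is_series_cauchy (a b : nat -> R) :
  ex_seriesR (fun k => Rabs (a k)) -> ex_seriesR (fun k => Rabs (b k)) ->
  is_seriesR (fun N => sum_f_R0 (fun k => a k * b (N - k)%nat) N)
    (Series.Series a * Series.Series b).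
Proof.
move=> exa exb; apply: (Series.is_series_mult _ _ _ _ _ _ exa exb);
  by apply: Series.Series_correct; apply: Series.ex_series_Rabs.
Qed.

Lemma LF_closed_lim n (C : {mpoly R[n]} -> Prop) d (P : nat -> {mpoly R[n]})
    (f : 'X_{1..n} -> R) :
  LF_closed C -> (forall N, C (P N)) -> (forall N, (msize (P N) <= d)%nat) ->
  (forall m : 'X_{1..n < d}, Hierarchy.filterlim (fun N => (P N)@_m)
     Hierarchy.eventually (@Hierarchy.locally Hierarchy.R_UniformSpace (f m))) ->
  C (\sum_(m : 'X_{1..n < d}) f m *: 'X_[m]).
Proof.
move=> Cclosed CP Pd Pf.
apply: (@Hierarchy.closed_filterlim _
  (Hierarchy.fct_UniformSpace 'X_{1..n < d} Hierarchy.R_UniformSpace) _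
  (Hierarchy.Proper_StrongProper _ Hierarchy.eventually_filter)
  (fun N (m : 'X_{1..n < d}) => (P N)@_m) _ (fun m => f m) _ _ (Cclosed d)).
  exact: filterlim_fct_fin.
by move=> N; rewrite /= -(mpolywE (Pd N)).
Qed.

Section Exponential.
Variable n : nat.
Variable T : {mpoly R[n]} -> {mpoly R[n]}.
Hypothesis fT : filtered_linear T.
Implicit Types (p q : {mpoly R[n]}) (m b g : 'X_{1..n}).

Definition expterm t p m k := t ^+ k / (k`!)%:R * (iter k T p)@_m.

Definition expcoef t p m := Series.Series (expterm t p m).

Lemma ex_series_abs_expterm t p m :
  ex_seriesR (fun k => Rabs (expterm t p m k)).
Proof.
have [K K0 TkK] := mcoeff_iter_bound fT p.
exact: ex_series_abs_exp_dominated K0 (TkK^~ m).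
Qed.

Lemma ex_series_expterm t p m : ex_seriesR (expterm t p m).
Proof. exact: Series.ex_series_Rabs (ex_series_abs_expterm t p m). Qed.

Lemma expcoef_eq0 t p m : (msize p <= mdeg m)%nat -> expcoef t p m = 0.
Proof.
move=> pm; apply: Series_eq0 => k; rewrite /expterm mcoeff_eq0_msize ?mulr0 //.
exact: leq_trans (msize_filtered_linear (filtered_linear_iter k fT) p) pm.
Qed.

Lemma mcoeff_expop t p m : (expop t T p)@_m = expcoef t p m.
Proof.
have [mp|pm] := ltnP (mdeg m) (msize p); first exact: mcoeff_mpoly.
rewrite expcoef_eq0 // mcoeff_eq0_msize //.
exact: leq_trans (msize_mpolyw (msize p) (expcoef t p)) pm.
Qed.

Lemma expcoef_linear t c p q m :
  expcoef t (c *: p + q) m = c * expcoef t p m + expcoef t q m.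
Proof.
rewrite -[RHS]/(Rplus _ _) -[c * _]/(Rmult _ _) -Series.Series_scal_l.
rewrite -Series.Series_plus; last exact: ex_series_expterm.
  apply: Series.Series_ext => k; rewrite /expterm (filtered_linear_iter k fT).1.
  by rewrite mcoeffD mcoeffZ RplusE RmultE; ring.
exact: Series.ex_series_scal_l (ex_series_expterm t p m).
Qed.

Lemma filtered_linear_expop t : filtered_linear (expop t T).
Proof.
split=> [c p q|p]; last exact: msize_mpolyw (msize p) (expcoef t p).
by apply/mpolyP => m; rewrite mcoeffD mcoeffZ !mcoeff_expop expcoef_linear.
Qed.

Lemma expop_cone (C : {mpoly R[n]} -> Prop) t p :
  convex_cone C -> LF_closed C -> (forall q, C q -> C (T q)) -> 0 <= t ->
  C p -> C (expop t T p).
Proof.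
move=> [C0 Cconv] Cclosed CT t0 Cp.
pose partial N := \sum_(k < N) (t ^+ k / (k`!)%:R) *: iter k T p.
rewrite /expop; apply: (LF_closed_lim (P := fun N => partial N.+1)
  (f := expcoef t p) Cclosed) => [N|N|m].
- elim: N.+1 => [|k IH]; first by rewrite /partial big_ord0.
  rewrite /partial big_ord_recr /= -[X in C (X + _)]scale1r.
  apply: Cconv; rewrite ?ler01 ?divr_ge0 ?exprn_ge0 //.
  by elim: k {IH} => //= k; apply: CT.
- rewrite (leq_trans (msize_sum _ _ _)) //; apply/bigmax_leqP => k _.
  rewrite (leq_trans (msizeZ_le _ _)) //.
  exact: msize_filtered_linear (filtered_linear_iter k fT) p.
- apply: (Hierarchy.filterlim_ext (sum_nR (expterm t p m))).
    move=> N; rewrite sum_nE raddf_sum.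
    by apply: eq_bigr => k _; rewrite /= mcoeffZ.
  exact: Series.Series_correct (ex_series_expterm t p m).
Qed.

Lemma expcoef_mpolyw s d p b : (msize p <= d)%nat ->
  expcoef s p b = \sum_(g : 'X_{1..n < d}) p@_g * expcoef s 'X_[g] b.
Proof.
move=> pd; transitivity
  (\sum_(g : 'X_{1..n < d}) Series.Series (fun k => p@_g * expterm s 'X_[g] b k)).
  rewrite -Series_big => [|g]; last first.
    exact: Series.ex_series_scal_l (ex_series_expterm _ _ _).
  apply: Series.Series_ext => k.
  rewrite /expterm (mcoeff_filtered_linear (filtered_linear_iter k fT) b pd).
  by rewrite mulr_sumr; apply: eq_bigr => g _; ring.
by apply: eq_bigr => g _; rewrite Series.Series_scal_l.
Qed.

Lemma expterm_convolution t p b N :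
  \sum_(g : 'X_{1..n < msize p})
     sum_f_R0 (fun k => expterm (-t) 'X_[g] b k * expterm t p g (N - k)%nat) N
  = (N == 0)%:R * (iter N T p)@_b.
Proof.
under eq_bigr => g _ do rewrite sum_f_R0E.
rewrite exchange_big /= -(exp_neg_convolution t) mulr_suml.
apply: eq_bigr => k _; have kN : (k <= N)%nat by rewrite -ltnS.
have Tp : (msize (iter (N - k) T p) <= msize p)%nat.
  exact: msize_filtered_linear (filtered_linear_iter _ fT) p.
have -> : iter N T p = iter k T (iter (N - k) T p) by rewrite -iterD subnKC.
rewrite (mcoeff_filtered_linear (filtered_linear_iter k fT) b Tp) mulr_sumr.
by apply: eq_bigr => g _; rewrite /expterm; ring.
Qed.

Lemma expcoef_neg_expop t p b : expcoef (-t) (expop t T p) b = p@_b.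
Proof.
pose conv g N :=
  sum_f_R0 (fun k => expterm (-t) 'X_[g] b k * expterm t p g (N - k)%nat) N.
have conv_lim g :
    is_seriesR (conv g) (expcoef (-t) 'X_[g] b * expcoef t p g).
  exact: is_series_cauchy (ex_series_abs_expterm _ _ _)
    (ex_series_abs_expterm _ _ _).
rewrite (expcoef_mpolyw _ _ (msize_filtered_linear (filtered_linear_expop t) p)).
under eq_bigr => g _ do
  rewrite mcoeff_expop mulrC -(Series.is_series_unique _ _ (conv_lim g)).
rewrite -Series_big => [|g]; last by eexists; apply: conv_lim.
apply: Series.is_series_unique; apply: is_series_sum_n_const => N.
rewrite sum_nE big_ord_recl /conv expterm_convolution mul1r.
by rewrite big1 ?addr0 // => k _; rewrite expterm_convolution mul0r.
Qed.

Lemma expop_inj t p : expop t T p = 0 -> p = 0.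
Proof.
move=> p0; apply/mpolyP => b.
by rewrite -(expcoef_neg_expop t) p0 mcoeff0 expcoef_eq0 ?msize0.
Qed.

End Exponential.

Theorem corollary5p6 (n : nat) (C : {mpoly R[n]} -> Prop) :
  convex_cone C -> LF_closed C ->
  forall T : {mpoly R[n]} -> {mpoly R[n]}, in_DC C T -> in_dC C T.
Proof.
move=> Ccone Cclosed T [[dT _] CT].
have fT := in_d_filtered_linear dT.
split=> // t t0; split; first split.
- exact: filtered_linear_in_d (filtered_linear_expop fT t).
- exact: expop_inj.
- by move=> p; apply: expop_cone.
Qed.
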